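(* Let $\eta>0$, let $X^\eta$ be the unique minimizer of $g_\eta$ over $\mathbb{R}^{n\times n}_+$, let $X_f$ be any minimizer of $f$ over $\mathbb{R}^{n\times n}_+$, and let $(\mathbf u^*,\mathbf v^* )$ be the $(\mathbf u,\mathbf v)$-part of an optimal solution of the dual problem $\max_{(\mathbf u,\mathbf v,\mathbf t)\in\mathcal X}\{-\frac{1}{4\eta}\sum_{ij}t_{ij}^2-\tau\langle e^{-\mathbf u/\tau},\mathbf a\rangle-\tau\langle e^{-\mathbf v/\tau},\mathbf b\rangle+\mathbf a^\top\mathbf 1_n+\mathbf b^\top\mathbf 1_n\}$ with $\mathcal X=\{(\mathbf u,\mathbf v,\mathbf t):t_{ij}\ge0,\ t_{ij}\ge u_i+v_j-C_{ij}\}$. Let $D=\|C\|_\infty+\eta(\alpha+\beta)+\tau\log\big(\frac{\alpha+\beta}{2}\big)-\tau\min\{\log a_{min},\log b_{min}\}$. Then: (i) $\|X^\eta\|_1\le\frac{\alpha+\beta}{2}$ and $\|X_f\|_1\le\frac{\alpha+\beta}{2}$; (ii) $u^*_i\ge\tau\log\big(\frac{2a_i}{\alpha+\beta}\big)$ and $v^*_j\ge\tau\log\big(\frac{2b_j}{\alpha+\beta}\big)$ for all $i,j\in[n]$; (iii) $\|\mathbf u^*\|_\infty\le D$ and $\|\mathbf v^*\|_\infty\le D$; (iv) $\min_{i,j}\big\{\sum_{k}X^\eta_{ik},\sum_k X^\eta_{kj}\big\}\ge\min\{a_{min},b_{min}\}e^{-D/\tau}$.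
   Context: Let $n\ge1$, $C\in\mathbb{R}^{n\times n}$ with nonnegative entries and $\|C\|_\infty=\max_{i,j}|C_{ij}|$; $\mathbf a,\mathbf b\in\mathbb{R}^n$ with strictly positive entries, $\alpha=\sum_i a_i$, $\beta=\sum_i b_i$, $a_{min}=\min_i a_i$, $b_{min}=\min_i b_i$; $\tau>0$. For $\mathbf x\in\mathbb{R}^n_+$ and $\mathbf y$ with positive entries, $\mathbf{KL}(\mathbf x\|\mathbf y)=\sum_i x_i\log(x_i/y_i)-x_i+y_i$ (with $0\log0=0$). $\|X\|_1=\sum_{ij}|X_{ij}|$, $\|X\|_2$ is the Frobenius norm, $\mathbf 1_n$ the all-ones vector, $e^{-\mathbf u/\tau}$ the entrywise exponential. $f(X)=\langle C,X\rangle+\tau\mathbf{KL}(X\mathbf 1_n\|\mathbf a)+\tau\mathbf{KL}(X^\top\mathbf 1_n\|\mathbf b)$ for $X\in\mathbb{R}^{n\times n}_+$, and $g_\eta(X)=f(X)+\eta\|X\|_2^2$. *)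

From mathcomp Require Import all_boot all_order all_algebra.
From mathcomp Require Import all_classical all_reals all_analysis.
Set Implicit Arguments. Unset Strict Implicit. Unset Printing Implicit Defensive.
Import Order.TTheory GRing.Theory Num.Theory.
Local Open Scope ring_scope.

Section Defs.
Variables (R : realType) (n : nat).

Definition KL (x y : 'I_n -> R) : R :=
  \sum_i ((if x i == 0 then 0 else x i * ln (x i / y i)) - x i + y i).

Definition rowsum (X : 'M[R]_n) : 'I_n -> R := fun i => \sum_k X i k.
Definition colsum (X : 'M[R]_n) : 'I_n -> R := fun j => \sum_k X k j.

Definition nonneg_mx (X : 'M[R]_n) : Prop := forall i j, 0 <= X i j.

Definition fobj (C : 'M[R]_n) (a b : 'I_n -> R) (tau : R) (X : 'M[R]_n) : R :=
  \sum_i \sum_j C i j * X i j + tau * KL (rowsum X) a + tau * KL (colsum X) b.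

Definition gobj (C : 'M[R]_n) (a b : 'I_n -> R) (tau eta : R) (X : 'M[R]_n) : R :=
  fobj C a b tau X + eta * \sum_i \sum_j X i j ^+ 2.

Definition is_minimizer (F : 'M[R]_n -> R) (X : 'M[R]_n) : Prop :=
  nonneg_mx X /\ forall Y, nonneg_mx Y -> F X <= F Y.

Definition norm1_mx (X : 'M[R]_n) : R := \sum_i \sum_j `|X i j|.
Definition normInf_mx (X : 'M[R]_n) : R := \big[Num.max/0]_i \big[Num.max/0]_j `|X i j|.
Definition normInf_v (x : 'I_n -> R) : R := \big[Num.max/0]_i `|x i|.

(* minimum entry of a vector; the default i0 only serves as seed (n >= 1) *)
Definition vmin (i0 : 'I_n) (x : 'I_n -> R) : R := \big[Num.min/x i0]_i x i.

Definition dual_feasible (C : 'M[R]_n) (u v : 'I_n -> R) (t : 'M[R]_n) : Prop :=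
  forall i j, 0 <= t i j /\ u i + v j - C i j <= t i j.

Definition dual_obj (a b : 'I_n -> R) (tau eta : R) (u v : 'I_n -> R) (t : 'M[R]_n) : R :=
  - (4 * eta)^-1 * (\sum_i \sum_j t i j ^+ 2)
  - tau * (\sum_i expR (- u i / tau) * a i)
  - tau * (\sum_j expR (- v j / tau) * b j)
  + \sum_i a i + \sum_j b j.

Definition dual_optimal (C : 'M[R]_n) (a b : 'I_n -> R) (tau eta : R)
  (u v : 'I_n -> R) (t : 'M[R]_n) : Prop :=
  dual_feasible C u v t /\
  forall u' v' t', dual_feasible C u' v' t' ->
    dual_obj a b tau eta u' v' t' <= dual_obj a b tau eta u v t.

End Defs.

From mathcomp Require Import all_boot all_order all_algebra.
From mathcomp Require Import all_classical all_reals all_analysis.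
From mathcomp Require Import ring lra.
Import Order.TTheory GRing.Theory Num.Theory.
Local Open Scope ring_scope.

(* Both primal bounds come from first-order optimality of a minimizer [X] of
   [f + e ||X||_2^2] with [e >= 0].  Scaling [X] by [c] near [1] shows that the cost
   [<C, X>] plus [tau] times the entropies [sum_i r_i ln (r_i / a_i)] and
   [sum_j q_j ln (q_j / b_j)] of the marginals is nonpositive; as [<C, X> >= 0], the
   log-sum inequality gives [||X||_1^2 <= alpha beta <= ((alpha + beta) / 2)^2].
   Increasing a single entry [X_ij] shows [r_i q_j >= a_i b_j e^{-(C_ij + 2 e X_ij)/tau}],
   which yields (iv).
   On the dual side, [t] can be replaced by [t_ij = max(0, u_i + v_j - C_ij)], and
   perturbing [u_i] and [v_j] gives the stationarity equations
   [a_i e^{-u_i/tau} = (2 eta)^-1 sum_j t_ij] and [b_j e^{-v_j/tau} = (2 eta)^-1 sum_i t_ij].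
   Both families thus have the same mass [S]; the log-sum inequality and
   [sum_ij t_ij (u_i + v_j) >= 0] give [S <= (alpha + beta) / 2].  This is (ii), bounds
   [t_ij] by [eta (alpha + beta)], and (iii) follows from [u_i <= C_ij + t_ij - v_j]. *)

Set Implicit Arguments. Unset Strict Implicit.

Section RealFacts.
Variable R : realType.
Implicit Types x y d s : R.

Lemma ln_le_subr1 x : 0 < x -> ln x <= x - 1.
Proof.
move=> x0; have := @le_ln1Dx R (x - 1).
by rewrite addrCA subrr addr0; apply; lra.
Qed.

Lemma le0_of_le_mulr_small (A K d0 : R) : 0 < d0 -> 0 <= K ->
  (forall d, 0 < d -> d <= d0 -> A <= K * d) -> A <= 0.
Proof.
move=> d0_gt0 K_ge0 small_le; rewrite leNgt; apply/negP => A_gt0.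
pose d := Num.min d0 (A / (K + 1)).
have d_gt0 : 0 < d by rewrite lt_min d0_gt0 divr_gt0 //; lra.
have Kd_le : (K + 1) * d <= A.
  by rewrite mulrC -ler_pdivlMr ?ge_min ?lexx ?orbT //; lra.
have := small_le d d_gt0 (_ : d <= d0); rewrite ge_min lexx => /(_ isT); nra.
Qed.

(* AM-GM: [s^2 <= al be <= ((al + be) / 2)^2]. *)
Lemma le_mean_of_ln_add_le0 s (al be : R) : 0 < s -> 0 < al -> 0 < be ->
  ln (s / al) + ln (s / be) <= 0 -> s <= (al + be) / 2.
Proof.
move=> s0 al0 be0; rewrite -lnM ?posrE ?divr_gt0 // -ln1.
have p0 : 0 < s / al * (s / be) by rewrite mulr_gt0 ?divr_gt0.
rewrite ler_ln ?posrE // mulf_div ler_pdivrMr ?mulr_gt0 // mul1r => ss.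
rewrite leNgt; apply/negP => lt_s.
have : (al + be) / 2 * ((al + be) / 2) < s * s by apply: ltr_pM; lra.
have := sqr_ge0 (al - be); nra.
Qed.

Lemma expRN_le_quadratic y : - 2^-1 <= y -> expR (- y) <= 1 - y + 2 * y ^+ 2.
Proof.
move=> y_ge; rewrite expRN -[_^-1]mul1r ler_pdivrMr ?expR_gt0 //.
have q0 : 0 <= 1 - y + 2 * y ^+ 2 by nra.
apply: le_trans (ler_wpM2l q0 (expR_ge1Dx y)); nra.
Qed.

Lemma sqr_max0D_le x d :
  Num.max 0 (x + d) ^+ 2 <= Num.max 0 x ^+ 2 + 2 * d * Num.max 0 x + d ^+ 2.
Proof.
by case: (leP 0 x) => hx; case: (leP 0 (x + d)) => hxd;
  rewrite ?max_r ?max_l //; try nra; rewrite max_r //; nra.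
Qed.

Lemma ln_min x y : 0 < x -> 0 < y -> ln (Num.min x y) = Num.min (ln x) (ln y).
Proof.
move=> x0 y0; case: (leP x y) => xy.
  by rewrite !min_l // ler_ln.
by rewrite !min_r ?ler_ln // ltW.
Qed.

Lemma min_ge_of_mul_ge (r q H K : R) :
  0 < H -> r <= H -> q <= H -> 0 <= r -> 0 <= q -> K <= r * q -> K / H <= Num.min r q.
Proof.
move=> H_gt0 r_le q_le r_ge0 q_ge0 K_le; rewrite le_min !ler_pdivrMr //.
apply/andP; split; apply: le_trans K_le _; first exact: ler_wpM2l.
by rewrite [q * H]mulrC; apply: ler_wpM2r.
Qed.

Lemma ln_le_of_mulr_expRN_le (x y s tau : R) :
  0 < tau -> 0 < y -> 0 < s -> y * expR (- x / tau) <= s / 2 -> tau * ln (2 * y / s) <= x.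
Proof.
move=> tau_gt0 y_gt0 s_gt0; rewrite mulNr expRN ler_pdivrMr ?expR_gt0 // => le_s.
rewrite mulrC -ler_pdivlMr // -ler_expR lnK ?posrE ?divr_gt0 ?mulr_gt0 //.
rewrite ler_pdivrMr //; lra.
Qed.

Lemma abs_le_of_ln_bounds (x y z s N lm tau : R) :
  0 < tau -> 0 <= N -> 0 < y -> 0 < z -> 0 < s -> lm <= ln y -> lm <= ln z ->
  tau * ln (2 * y / s) <= x -> x <= N - tau * ln (2 * z / s) ->
  `|x| <= N + tau * ln (s / 2) - tau * lm.
Proof.
move=> tau_gt0 N_ge0 y_gt0 z_gt0 s_gt0 lm_y lm_z.
have ln2 w : 0 < w -> ln (2 * w / s) = ln w - ln (s / 2).
  move=> w_gt0; rewrite -ln_div ?posrE ?divr_gt0 //; congr ln; field.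
  by rewrite gt_eqF.
rewrite !ln2 // => x_ge x_le.
have lm_y' := ler_wpM2l (ltW tau_gt0) lm_y; have lm_z' := ler_wpM2l (ltW tau_gt0) lm_z.
rewrite ler_norml; apply/andP; split; lra.
Qed.

Lemma max0_subr_mulr_ge0 (x c : R) : 0 <= c -> 0 <= Num.max 0 (x - c) * x.
Proof.
move=> c_ge0; have [le_xc | lt_cx] := leP x c; first by rewrite max_l ?mul0r // subr_le0.
have c_le_x := ltW lt_cx.
by rewrite max_r ?subr_ge0 // mulr_ge0 ?subr_ge0 // (le_trans c_ge0).
Qed.

End RealFacts.

Section Sums.
Variables (R : realType) (n : nat).
Implicit Types (f : 'I_n -> R) (X : 'M[R]_n).

Lemma sumr_gt0 (i0 : 'I_n) f : (forall i, 0 < f i) -> 0 < \sum_i f i.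
Proof.
move=> f_gt0; rewrite (bigD1 i0) //=; apply: ltr_wpDr (f_gt0 i0).
by apply: sumr_ge0 => i _; apply: ltW.
Qed.

Lemma ler_sumr_term f i : (forall k, 0 <= f k) -> f i <= \sum_k f k.
Proof.
by move=> f_ge0; rewrite (bigD1 i) //= lerDl; apply: sumr_ge0.
Qed.

Lemma sumr_update (F : 'I_n -> R -> R) (x : 'I_n -> R) i t :
  \sum_k F k (x k + t * (k == i)%:R) - \sum_k F k (x k) = F i (x i + t) - F i (x i).
Proof.
rewrite (bigD1 i) //= [X in _ - X](bigD1 i) //= eqxx mulr1.
rewrite (eq_bigr (fun k => F k (x k))); last by move=> k /negbTE ->; rewrite mulr0 addr0.
ring.
Qed.

Lemma sumr2_update (F : 'I_n -> 'I_n -> R -> R) X i j t :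
  \sum_k \sum_l F k l ((X + t *: delta_mx i j) k l) - \sum_k \sum_l F k l (X k l)
  = F i j (X i j + t) - F i j (X i j).
Proof.
rewrite (bigD1 i) //= [X in _ - X](bigD1 i) //=.
rewrite [\sum_(k | k != i) _](eq_bigr (fun k => \sum_l F k l (X k l))); last first.
  by move=> k /negbTE ki; apply: eq_bigr => l _; rewrite !mxE ki mulr0 addr0.
have <- := sumr_update (F i) (X i) j t.
rewrite (eq_bigr (fun l => F i l (X i l + t * (l == j)%:R))); last by move=> l _; rewrite !mxE eqxx.
ring.
Qed.

Lemma rowsum_update X i j t k :
  rowsum (X + t *: delta_mx i j) k = rowsum X k + t * (k == i)%:R.
Proof.
have /= := sumr_update (fun _ z => z) (X k) j (t * (k == i)%:R).
have -> : rowsum (X + t *: delta_mx i j) k = \sum_l (X k l + t * (k == i)%:R * (l == j)%:R).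
  by apply: eq_bigr => l _; rewrite !mxE -mulnb natrM mulrA.
rewrite /rowsum; lra.
Qed.

Lemma colsum_update X i j t l :
  colsum (X + t *: delta_mx i j) l = colsum X l + t * (l == j)%:R.
Proof.
have /= := sumr_update (fun _ z => z) (fun k => X k l) i (t * (l == j)%:R).
have -> : colsum (X + t *: delta_mx i j) l = \sum_k (X k l + t * (l == j)%:R * (k == i)%:R).
  by apply: eq_bigr => k _; rewrite !mxE -mulnb natrM mulrA mulrAC.
rewrite /colsum; lra.
Qed.

Lemma rowsum_tr X i : rowsum X^T i = colsum X i.
Proof. by apply: eq_bigr => k _; rewrite mxE. Qed.

Lemma sum_colsum X : \sum_j colsum X j = \sum_i rowsum X i.
Proof. exact: exchange_big. Qed.

Lemma rowsum_ge0 X i : nonneg_mx X -> 0 <= rowsum X i.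
Proof. by move=> X_ge0; apply: sumr_ge0 => j _. Qed.

Lemma colsum_ge0 X j : nonneg_mx X -> 0 <= colsum X j.
Proof. by move=> X_ge0; apply: sumr_ge0 => i _. Qed.

Lemma norm1_mx_nonneg X : nonneg_mx X -> norm1_mx X = \sum_i rowsum X i.
Proof. by move=> X_ge0; apply: eq_bigr => i _; apply: eq_bigr => j _; rewrite ger0_norm. Qed.

Lemma le_normInf_mx X i j : X i j <= normInf_mx X.
Proof.
apply: le_trans (ler_norm _) _.
apply: le_trans (le_bigmax _ (fun i => \big[Num.max/0]_j `|X i j|) i).
exact: (le_bigmax _ (fun j => `|X i j|)).
Qed.

Lemma normInf_v_le (i0 : 'I_n) f B : (forall i, `|f i| <= B) -> normInf_v f <= B.
Proof.
move=> f_le; apply: bigmax_le => [|i _]; last exact: f_le.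
exact: le_trans (normr_ge0 _) (f_le i0).
Qed.

Lemma vmin_gt0 (i0 : 'I_n) f : (forall i, 0 < f i) -> 0 < vmin i0 f.
Proof. by move=> f_gt0; rewrite /vmin; elim/big_ind: _ => // x y x0 y0; rewrite lt_min x0 y0. Qed.

Lemma vmin_le (i0 : 'I_n) f i : vmin i0 f <= f i.
Proof. exact: bigmin_le. Qed.

End Sums.

Section KLTerm.
Variable R : realType.
Implicit Types x y z c k : R.

Definition klterm x y : R := if x == 0 then 0 else x * ln (x / y).

Lemma klterm_incr_le x t y : 0 <= x -> 0 < t -> 0 < y ->
  klterm (x + t) y - klterm x y <= t * (ln ((x + t) / y) + 1).
Proof.
move=> x_ge0 t_gt0 y_gt0; rewrite /klterm gt_eqF; last by lra.
have [-> | x_neq0] := eqVneq x 0; first by rewrite add0r subr0; nra.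
have x_gt0 : 0 < x by rewrite lt_neqAle eq_sym x_neq0.
have xt_gt0 : 0 < x + t by lra.
rewrite !ln_div ?posrE //.
have := ln_le_subr1 (divr_gt0 xt_gt0 x_gt0); rewrite ln_div ?posrE // => ln_le.
have : x * (ln (x + t) - ln x) <= x * ((x + t) / x - 1) by rewrite ler_pM2l.
have -> : x * ((x + t) / x - 1) = t by field; rewrite gt_eqF.
nra.
Qed.

Lemma klterm_scale c x y : 0 < c -> 0 <= x -> 0 < y ->
  klterm (c * x) y = c * klterm x y + c * ln c * x.
Proof.
move=> c_gt0 x_ge0 y_gt0; rewrite /klterm mulf_eq0 (gt_eqF c_gt0) /=.
have [-> | x_neq0] := eqVneq x 0; first by rewrite !mulr0 addr0.
have x_gt0 : 0 < x by rewrite lt_neqAle eq_sym x_neq0.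
have -> : c * x / y = c * (x / y) by rewrite mulrA.
by rewrite lnM ?posrE ?divr_gt0 //; ring.
Qed.

(* The tangent line of [x |-> x ln (x / y)] at [x = k y]. *)
Lemma klterm_ge_tangent k x y : 0 < k -> 0 <= x -> 0 < y ->
  x * ln k - k * y + x <= klterm x y.
Proof.
move=> k_gt0 x_ge0 y_gt0; rewrite /klterm.
have [-> | x_neq0] := eqVneq x 0; first by rewrite mul0r add0r addr0 oppr_le0; nra.
have x_gt0 : 0 < x by rewrite lt_neqAle eq_sym x_neq0.
have ln_le := ln_le_subr1 (divr_gt0 k_gt0 (divr_gt0 x_gt0 y_gt0)).
rewrite ln_div ?posrE ?divr_gt0 // in ln_le.
have : x * (ln k - ln (x / y)) <= x * (k / (x / y) - 1) by rewrite ler_pM2l.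
have -> : x * (k / (x / y) - 1) = k * y - x by field; rewrite !gt_eqF.
nra.
Qed.

Lemma klterm_mulr_expR y z : 0 < y -> klterm (y * expR z) y = y * expR z * z.
Proof.
move=> y_gt0; rewrite /klterm mulf_eq0 expR_eq0 orbF (gt_eqF y_gt0) /=.
by rewrite [y * _ / y]mulrAC divff ?gt_eqF // mul1r expRK.
Qed.

Variable n : nat.
Implicit Types u v : 'I_n -> R.

Lemma KLE u v : KL u v = \sum_i klterm (u i) (v i) - \sum_i u i + \sum_i v i.
Proof. by rewrite /KL !big_split /= sumrN. Qed.

Lemma log_sum_le u v : (forall i, 0 <= u i) -> (forall i, 0 < v i) ->
  0 < \sum_i u i -> 0 < \sum_i v i ->
  (\sum_i u i) * ln ((\sum_i u i) / (\sum_i v i)) <= \sum_i klterm (u i) (v i).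
Proof.
move=> u_ge0 v_gt0 su_gt0 sv_gt0; set k := (\sum_i u i) / (\sum_i v i).
have k_gt0 : 0 < k by rewrite divr_gt0.
apply: le_trans (ler_sum _ (fun i _ => klterm_ge_tangent k_gt0 (u_ge0 i) (v_gt0 i))).
rewrite !big_split /= sumrN -mulr_suml -mulr_sumr /k divfK ?gt_eqF //; lra.
Qed.

Lemma KL_scale c u v : 0 < c -> (forall i, 0 <= u i) -> (forall i, 0 < v i) ->
  KL (fun i => c * u i) v =
  c * \sum_i klterm (u i) (v i) + c * ln c * \sum_i u i - c * \sum_i u i + \sum_i v i.
Proof.
move=> c_gt0 u_ge0 v_gt0; rewrite !KLE -!mulr_sumr.
rewrite (eq_bigr _ (fun i _ => klterm_scale c_gt0 (u_ge0 i) (v_gt0 i))).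
by rewrite big_split /= -!mulr_sumr.
Qed.

Lemma KL_update (x y : 'I_n -> R) i t :
  KL (fun l => x l + t * (l == i)%:R) y - KL x y
  = klterm (x i + t) (y i) - klterm (x i) (y i) - t.
Proof.
apply: etrans (sumr_update (fun l z => klterm z (y l) - z + y l) x i t) _; ring.
Qed.

Lemma sum_klterm_mulr_expRN (w z : 'I_n -> R) (tau : R) :
  (forall i, 0 < w i) ->
  \sum_i klterm (w i * expR (- z i / tau)) (w i)
  = - (\sum_i w i * expR (- z i / tau) * z i) / tau.
Proof.
move=> w_gt0; rewrite mulNr mulr_suml -sumrN; apply: eq_bigr => i _.
by rewrite klterm_mulr_expR // mulNr mulrN mulrA.
Qed.

End KLTerm.

Lemma is_minimizer_fobj_gobj0 (R : realType) n (C : 'M[R]_n) a b tau X :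
  is_minimizer (fobj C a b tau) X -> is_minimizer (gobj C a b tau 0) X.
Proof. by rewrite /gobj; under eq_fun do rewrite mul0r addr0. Qed.

Section Primal.
Variables (R : realType) (n : nat) (C : 'M[R]_n) (a b : 'I_n -> R) (tau e : R).
Hypotheses (C_ge0 : forall i j, 0 <= C i j) (a_gt0 : forall i, 0 < a i)
  (b_gt0 : forall j, 0 < b j) (tau_gt0 : 0 < tau) (e_ge0 : 0 <= e).
Implicit Types X : 'M[R]_n.

Let g := gobj C a b tau e.

Definition klcost X : R :=
  \sum_i \sum_j C i j * X i j
  + tau * (\sum_i klterm (rowsum X i) (a i) + \sum_j klterm (colsum X j) (b j)).

Lemma gobj_scale c X : 0 < c -> nonneg_mx X ->
  g (c *: X) - g X = (c - 1) * klcost X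
    + 2 * tau * (\sum_i rowsum X i) * (c * ln c - c + 1)
    + e * (c ^+ 2 - 1) * \sum_i \sum_j X i j ^+ 2.
Proof.
move=> c_gt0 X_ge0; rewrite /g /gobj /fobj.
have -> : rowsum (c *: X) = (fun i => c * rowsum X i).
  by apply/funext => i; rewrite /rowsum mulr_sumr; apply: eq_bigr => j _; rewrite mxE.
have -> : colsum (c *: X) = (fun j => c * colsum X j).
  by apply/funext => j; rewrite /colsum mulr_sumr; apply: eq_bigr => i _; rewrite mxE.
have -> : \sum_i \sum_j C i j * (c *: X) i j = c * \sum_i \sum_j C i j * X i j.
  rewrite mulr_sumr; apply: eq_bigr => i _; rewrite mulr_sumr.
  by apply: eq_bigr => j _; rewrite mxE mulrCA.
have -> : \sum_i \sum_j (c *: X) i j ^+ 2 = c ^+ 2 * \sum_i \sum_j X i j ^+ 2.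
  rewrite mulr_sumr; apply: eq_bigr => i _; rewrite mulr_sumr.
  by apply: eq_bigr => j _; rewrite mxE exprMn.
rewrite /klcost !KL_scale // => [|j|i]; last first.
- exact: rowsum_ge0.
- exact: colsum_ge0.
rewrite !KLE sum_colsum; ring.
Qed.

(* Optimality of [X] along the ray [c *: X] as [c -> 1-], where the quadratic term only
   decreases. *)
Lemma minimizer_klcost_le0 X : is_minimizer g X -> klcost X <= 0.
Proof.
move=> [X_ge0 X_min]; set s := \sum_i rowsum X i.
have s_ge0 : 0 <= s by apply: sumr_ge0 => i _; apply: rowsum_ge0.
have Q_ge0 : 0 <= \sum_i \sum_j X i j ^+ 2.
  by apply: sumr_ge0 => i _; apply: sumr_ge0 => j _; apply: sqr_ge0.
apply: (@le0_of_le_mulr_small _ _ (2 * tau * s) (1 / 2)) => [||d d_gt0 d_le].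
- lra.
- by rewrite !mulr_ge0 // ltW.
have c_gt0 : 0 < 1 - d by lra.
have cX_ge0 : nonneg_mx ((1 - d) *: X) by move=> i j; rewrite mxE mulr_ge0 // ltW.
have := X_min _ cX_ge0; rewrite -subr_ge0 gobj_scale // -/s => le_g.
have cln : (1 - d) * ln (1 - d) <= (1 - d) * (1 - d - 1).
  by rewrite ler_pM2l // ln_le_subr1.
have eQ : e * ((1 - d) ^+ 2 - 1) * \sum_i \sum_j X i j ^+ 2 <= 0.
  by rewrite -mulrA mulr_ge0_le0 // mulr_le0_ge0 //; nra.
have ts_ge0 : 0 <= 2 * tau * s by rewrite !mulr_ge0 // ltW.
have sln : 2 * tau * s * ((1 - d) * ln (1 - d) - (1 - d) + 1)
    <= 2 * tau * s * d ^+ 2.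
  by apply: ler_wpM2l => //; nra.
have : d * klcost X <= d * (2 * tau * s * d) by lra.
by rewrite ler_pM2l.
Qed.

Lemma minimizer_norm1_le (i0 : 'I_n) X : is_minimizer g X ->
  norm1_mx X <= (\sum_i a i + \sum_j b j) / 2.
Proof.
move=> X_opt; have X_ge0 := X_opt.1.
have al_gt0 : 0 < \sum_i a i := sumr_gt0 i0 a_gt0.
have be_gt0 : 0 < \sum_j b j := sumr_gt0 i0 b_gt0.
rewrite norm1_mx_nonneg //; set s := \sum_i rowsum X i.
have [s_le0 | s_gt0] := leP s 0.
  by apply: le_trans s_le0 _; apply: divr_ge0; lra.
have col_gt0 : 0 < \sum_j colsum X j by rewrite sum_colsum.
have row_ent := log_sum_le (fun i => rowsum_ge0 i X_ge0) a_gt0 s_gt0 al_gt0.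
have col_ent := log_sum_le (fun j => colsum_ge0 j X_ge0) b_gt0 col_gt0 be_gt0.
rewrite sum_colsum -/s in col_ent; rewrite -/s in row_ent.
have cost_ge0 : 0 <= \sum_i \sum_j C i j * X i j.
  by apply: sumr_ge0 => i _; apply: sumr_ge0 => j _; apply: mulr_ge0.
have cost_le0 := minimizer_klcost_le0 X_opt; rewrite /klcost in cost_le0.
apply: le_mean_of_ln_add_le0 => //.
have ent : s * (ln (s / \sum_i a i) + ln (s / \sum_j b j))
    <= \sum_i klterm (rowsum X i) (a i) + \sum_j klterm (colsum X j) (b j) by lra.
have ent_tau := ler_wpM2l (ltW tau_gt0) ent.
have : tau * (s * (ln (s / \sum_i a i) + ln (s / \sum_j b j))) <= 0 by lra.
by rewrite pmulr_rle0 // pmulr_rle0.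
Qed.

Lemma gobj_update X i j t :
  g (X + t *: delta_mx i j) - g X =
  C i j * t + tau * (klterm (rowsum X i + t) (a i) - klterm (rowsum X i) (a i) - t)
  + tau * (klterm (colsum X j + t) (b j) - klterm (colsum X j) (b j) - t)
  + e * ((X i j + t) ^+ 2 - X i j ^+ 2).
Proof.
rewrite /g /gobj /fobj.
have -> : rowsum (X + t *: delta_mx i j) = (fun k => rowsum X k + t * (k == i)%:R).
  by apply/funext => k; rewrite rowsum_update.
have -> : colsum (X + t *: delta_mx i j) = (fun l => colsum X l + t * (l == j)%:R).
  by apply/funext => l; rewrite colsum_update.
move/eqP: (sumr2_update (fun k l z => C k l * z) X i j t); rewrite subr_eq => /eqP ->.
move/eqP: (sumr2_update (fun k l z => z ^+ 2) X i j t); rewrite subr_eq => /eqP ->.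
move/eqP: (KL_update (rowsum X) a i t); rewrite subr_eq => /eqP ->.
move/eqP: (KL_update (colsum X) b j t); rewrite subr_eq => /eqP ->.
ring.
Qed.

Lemma minimizer_update_ge0 X i j t : is_minimizer g X -> 0 < t ->
  0 <= C i j + tau * ln ((rowsum X i + t) / a i * ((colsum X j + t) / b j))
       + e * (2 * X i j + t).
Proof.
move=> [X_ge0 X_min] t_gt0.
have r_ge0 := rowsum_ge0 i X_ge0; have q_ge0 := colsum_ge0 j X_ge0.
have Y_ge0 : nonneg_mx (X + t *: delta_mx i j).
  move=> k l; rewrite !mxE; apply: addr_ge0 => //.
  by apply: mulr_ge0; [exact: ltW | exact: ler0n].
have := X_min _ Y_ge0; rewrite -subr_ge0 gobj_update => le_g.
have incr_r := ler_wpM2l (ltW tau_gt0) (klterm_incr_le r_ge0 t_gt0 (a_gt0 i)).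
have incr_q := ler_wpM2l (ltW tau_gt0) (klterm_incr_le q_ge0 t_gt0 (b_gt0 j)).
rewrite lnM ?posrE ?divr_gt0 ?ltr_wpDl //.
have : 0 <= t * (C i j + tau * (ln ((rowsum X i + t) / a i) + ln ((colsum X j + t) / b j))
                 + e * (2 * X i j + t)) by nra.
by rewrite pmulr_rge0.
Qed.

(* The limit [t -> 0+] of [minimizer_update_ge0]. *)
Lemma minimizer_rowsum_mul_colsum_ge X i j : is_minimizer g X ->
  a i * b j * expR (- (C i j + 2 * e * X i j) / tau) <= rowsum X i * colsum X j.
Proof.
move=> X_opt; have X_ge0 := X_opt.1.
set r := rowsum X i; set q := colsum X j.
have r_ge0 : 0 <= r := rowsum_ge0 i X_ge0; have q_ge0 : 0 <= q := colsum_ge0 j X_ge0.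
set E := expR _; set M := a i * b j * E.
have ab_gt0 : 0 < a i * b j by rewrite mulr_gt0.
have M_gt0 : 0 < M by rewrite mulr_gt0 ?expR_gt0.
have Me_ge0 : 0 <= M * e / tau.
  exact: divr_ge0 (mulr_ge0 (ltW M_gt0) e_ge0) (ltW tau_gt0).
rewrite -subr_le0; apply: (@le0_of_le_mulr_small _ _ (r + q + 1 + M * e / tau) 1).
- exact: ltr01.
- lra.
move=> t t_gt0 t_le1.
have W_gt0 : 0 < (r + t) / a i * ((q + t) / b j) by rewrite mulr_gt0 ?divr_gt0 //; lra.
have := minimizer_update_ge0 i j X_opt t_gt0; rewrite -/r -/q => upd.
have lnW : - (C i j + e * (2 * X i j + t)) / tau <= ln ((r + t) / a i * ((q + t) / b j)).
  by rewrite ler_pdivrMr // mulrC; lra.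
rewrite -ler_expR lnK ?posrE // in lnW.
have split_exp : - (C i j + e * (2 * X i j + t)) / tau
    = - (C i j + 2 * e * X i j) / tau + - (e * t / tau) by field; rewrite gt_eqF.
rewrite split_exp expRD -/E mulf_div ler_pdivlMr // in lnW.
have : M * (1 - e * t / tau) <= (r + t) * (q + t).
  apply: le_trans lnW; rewrite /M -mulrA mulrC ler_pM2r // ler_pM2l ?expR_gt0 //.
  exact: expR_ge1Dx.
have -> : M * (1 - e * t / tau) = M - M * e / tau * t by ring.
nra.
Qed.

Lemma minimizer_marginal_ge (N lm m : R) X i j : is_minimizer g X ->
  (forall i j, C i j <= N) -> 0 < m -> (forall i, m <= a i) -> (forall j, m <= b j) ->
  lm <= ln m ->
  m * expR (- (N + e * (\sum_i a i + \sum_j b j) + tau * ln ((\sum_i a i + \sum_j b j) / 2)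
               - tau * lm) / tau)
  <= Num.min (rowsum X i) (colsum X j).
Proof.
move=> X_opt C_le m_gt0 m_le_a m_le_b lm_le; have X_ge0 := X_opt.1.
set AB := \sum_i a i + \sum_j b j; set H := AB / 2.
have H_gt0 : 0 < H by rewrite divr_gt0 // addr_gt0 // (sumr_gt0 i).
have total_le := minimizer_norm1_le i X_opt.
rewrite norm1_mx_nonneg // -/AB -/H in total_le.
have r_le : rowsum X i <= H.
  by apply: le_trans total_le; apply: ler_sumr_term => k; apply: rowsum_ge0.
have q_le : colsum X j <= H.
  apply: le_trans total_le; rewrite -sum_colsum.
  by apply: ler_sumr_term => l; apply: colsum_ge0.
have x_le : X i j <= H by apply: le_trans r_le; apply: ler_sumr_term.
set E1 := expR (- (N + e * AB) / tau).
have E1_le : E1 <= expR (- (C i j + 2 * e * X i j) / tau).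
  rewrite ler_expR ler_pdivrMr // divfK ?gt_eqF // lerN2.
  have x2_le : 2 * X i j <= AB by rewrite /H in x_le; lra.
  have := ler_wpM2l e_ge0 x2_le; have := C_le i j; lra.
have K_le : m * m * E1 <= rowsum X i * colsum X j.
  have m_ge0 := ltW m_gt0; have mm_le := ler_pM m_ge0 m_ge0 (m_le_a i) (m_le_b j).
  apply: le_trans (minimizer_rowsum_mul_colsum_ge i j X_opt).
  exact: ler_pM (mulr_ge0 m_ge0 m_ge0) (expR_ge0 _) mm_le E1_le.
have r_ge0 := rowsum_ge0 i X_ge0; have q_ge0 := colsum_ge0 j X_ge0.
apply: le_trans (min_ge_of_mul_ge H_gt0 r_le q_le r_ge0 q_ge0 K_le).
have -> : - (N + e * AB + tau * ln H - tau * lm) / tau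
    = - (N + e * AB) / tau + (- ln H + lm) by field; rewrite gt_eqF.
rewrite expRD expRD expRN lnK ?posrE // -/E1.
have -> : m * m * E1 / H = m * (E1 * (H^-1 * m)) by ring.
rewrite !ler_pM2l ?expR_gt0 ?invr_gt0 //.
by rewrite -(lnK m_gt0) ler_expR.
Qed.

End Primal.

Definition clip_mx (R : realType) n (C : 'M[R]_n) (u v : 'I_n -> R) : 'M[R]_n :=
  \matrix_(i, j) Num.max 0 (u i + v j - C i j).

Section DualFirstOrder.
Variables (R : realType) (n : nat) (C : 'M[R]_n) (a b : 'I_n -> R) (tau eta : R).
Hypotheses (a_gt0 : forall i, 0 < a i) (tau_gt0 : 0 < tau) (eta_gt0 : 0 < eta).
Implicit Types (u v : 'I_n -> R) (t : 'M[R]_n).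

Lemma clip_mx_ge0 u v i j : 0 <= clip_mx C u v i j.
Proof. by rewrite mxE le_max lexx. Qed.

Lemma clip_mx_feasible u v : dual_feasible C u v (clip_mx C u v).
Proof. by move=> i j; rewrite clip_mx_ge0 mxE le_max lexx orbT. Qed.

(* For fixed [u, v] the clipped [t] is the entrywise least feasible one. *)
Lemma dual_optimal_clip u v t : dual_optimal C a b tau eta u v t ->
  dual_optimal C a b tau eta u v (clip_mx C u v).
Proof.
move=> [t_feas t_opt]; split; first exact: clip_mx_feasible.
move=> u' v' t' t'_feas; apply: le_trans (t_opt _ _ _ t'_feas) _.
rewrite /dual_obj !lerD2r !mulNr lerN2; apply: ler_wpM2l.
  by rewrite invr_ge0 mulr_ge0 // ltW.
apply: ler_sum => i _; apply: ler_sum => j _.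
have [t_ge0 t_ge] := t_feas i j.
by rewrite ler_sqr ?nnegrE ?clip_mx_ge0 // mxE ge_max t_ge0.
Qed.

(* Compare with the feasible point where [u i] is moved to [u i + d] and [t] is re-clipped. *)
Lemma dual_optimal_perturb u v i d :
  dual_optimal C a b tau eta u v (clip_mx C u v) -> - (tau / 2) <= d ->
  d * (a i * expR (- u i / tau) - (2 * eta)^-1 * rowsum (clip_mx C u v) i)
  <= d ^+ 2 * (n%:R / (4 * eta) + 2 * (a i * expR (- u i / tau)) / tau).
Proof.
move=> [_ opt] d_ge; set E := a i * expR (- u i / tau).
set T := rowsum (clip_mx C u v) i.
pose u' k := u k + d * (k == i)%:R.
have := opt u' v _ (clip_mx_feasible u' v); rewrite /dual_obj.
have sq_sum u0 : \sum_k \sum_l clip_mx C u0 v k l ^+ 2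
    = \sum_k (fun k z => \sum_l Num.max 0 (z + v l - C k l) ^+ 2) k (u0 k).
  by apply: eq_bigr => k _; apply: eq_bigr => l _; rewrite mxE.
rewrite !sq_sum.
have sq_diff := sumr_update (fun k z => \sum_l Num.max 0 (z + v l - C k l) ^+ 2) u i d.
have ex_diff := sumr_update (fun k z => expR (- z / tau) * a k) u i d.
move/eqP: sq_diff; rewrite /= subr_eq => /eqP ->.
move/eqP: ex_diff; rewrite /= subr_eq [expR (- u i / tau) * a i]mulrC -/E => /eqP ->.
have sq_le : \sum_l Num.max 0 (u i + d + v l - C i l) ^+ 2
    <= \sum_l Num.max 0 (u i + v l - C i l) ^+ 2 + 2 * d * T + n%:R * d ^+ 2.
  have -> : n%:R * d ^+ 2 = \sum_(l < n) d ^+ 2 by rewrite sumr_const card_ord mulr_natl.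
  rewrite /T /rowsum mulr_sumr -!big_split /=.
  apply: ler_sum => l _; rewrite mxE.
  by rewrite (_ : u i + d + v l - C i l = u i + v l - C i l + d) ?sqr_max0D_le //; ring.
have dt_ge : - 2^-1 <= d / tau by rewrite ler_pdivlMr //; lra.
have ex_le : expR (- (u i + d) / tau) * a i <= E * (1 - d / tau + 2 * (d / tau) ^+ 2).
  rewrite (_ : - (u i + d) / tau = - u i / tau + - (d / tau)); last by ring.
  rewrite expRD mulrAC /E [a i * _]mulrC ler_pM2l ?mulr_gt0 ?expR_gt0 //.
  exact: expRN_le_quadratic.
have k_ge0 : 0 <= (4 * eta)^-1 by rewrite invr_ge0 mulr_ge0 // ltW.
have S_le := ler_wpM2l k_ge0 sq_le.
have B_le := ler_wpM2l (ltW tau_gt0) ex_le.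
have -> : (2 * eta)^-1 = 2 * (4 * eta)^-1 by field; rewrite gt_eqF.
have expand : tau * (E * (1 - d / tau + 2 * (d / tau) ^+ 2))
    = tau * E - d * E + d ^+ 2 * (2 * E / tau) by field; rewrite gt_eqF.
rewrite expand in B_le.
set k := (4 * eta)^-1 in S_le *.
lra.
Qed.

Lemma dual_optimal_foc_row u v t i : dual_optimal C a b tau eta u v t ->
  a i * expR (- u i / tau) = (2 * eta)^-1 * rowsum (clip_mx C u v) i.
Proof.
move/dual_optimal_clip => opt.
set E := a i * expR (- u i / tau).
set G := E - (2 * eta)^-1 * rowsum (clip_mx C u v) i.
set K := n%:R / (4 * eta) + 2 * E / tau.
have K_ge0 : 0 <= K.
  by rewrite addr_ge0 ?divr_ge0 ?mulr_ge0 ?ler0n ?ltW ?mulr_gt0 ?expR_gt0.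
have tau2_gt0 : 0 < tau / 2 by rewrite divr_gt0.
suff : G <= 0 /\ - G <= 0 by rewrite /G; lra.
split; apply: (@le0_of_le_mulr_small _ _ K (tau / 2)) => // d d_gt0 d_le.
- have := dual_optimal_perturb i opt (_ : - (tau / 2) <= d); rewrite -/E -/G -/K.
  by move=> /(_ ltac:(lra)); rewrite expr2 -mulrA ler_pM2l // mulrC.
- have := dual_optimal_perturb i opt (_ : - (tau / 2) <= - d); rewrite -/E -/G -/K.
  move=> /(_ ltac:(lra)).
  by rewrite sqrrN expr2 -mulrA mulNr -mulrN ler_pM2l // mulrC.
Qed.

End DualFirstOrder.

Lemma dual_optimal_tr (R : realType) n (C : 'M[R]_n) a b tau eta u v t :
  dual_optimal C a b tau eta u v t -> dual_optimal C^T b a tau eta v u t^T.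
Proof.
have objT (u0 v0 : 'I_n -> R) (t0 : 'M[R]_n) :
    dual_obj b a tau eta v0 u0 t0^T = dual_obj a b tau eta u0 v0 t0.
  rewrite /dual_obj.
  have -> : \sum_i \sum_j t0^T i j ^+ 2 = \sum_i \sum_j t0 i j ^+ 2.
    by rewrite exchange_big; apply: eq_bigr => i _; apply: eq_bigr => j _; rewrite mxE.
  ring.
have feasT (C0 : 'M[R]_n) (u0 v0 : 'I_n -> R) (t0 : 'M[R]_n) :
    dual_feasible C0 u0 v0 t0 -> dual_feasible C0^T v0 u0 t0^T.
  by move=> feas i j; have [t_ge0 t_ge] := feas j i; rewrite !mxE (addrC (v0 i)).
move=> [t_feas t_opt]; split; first exact: feasT.
move=> v' u' t' /feasT; rewrite trmxK => /t_opt.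
by move=> le; rewrite -[t']trmxK !objT.
Qed.

Lemma clip_mx_tr (R : realType) n (C : 'M[R]_n) u v :
  clip_mx C^T v u = (clip_mx C u v)^T.
Proof. by apply/matrixP => i j; rewrite !mxE (addrC (v i)). Qed.

Section DualBounds.
Variables (R : realType) (n : nat) (C : 'M[R]_n) (a b : 'I_n -> R) (tau eta : R)
  (u v : 'I_n -> R) (t : 'M[R]_n).
Hypotheses (C_ge0 : forall i j, 0 <= C i j) (a_gt0 : forall i, 0 < a i)
  (b_gt0 : forall j, 0 < b j) (tau_gt0 : 0 < tau) (eta_gt0 : 0 < eta)
  (opt : dual_optimal C a b tau eta u v t).

Let P := clip_mx C u v.
Let AB := \sum_i a i + \sum_j b j.

Let P_ge0 : nonneg_mx P := clip_mx_ge0 C u v.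

Let foc_row i : a i * expR (- u i / tau) = (2 * eta)^-1 * rowsum P i :=
  dual_optimal_foc_row a_gt0 tau_gt0 eta_gt0 i opt.

Lemma dual_optimal_foc_col j : b j * expR (- v j / tau) = (2 * eta)^-1 * colsum P j.
Proof.
rewrite -rowsum_tr -clip_mx_tr.
exact: (dual_optimal_foc_row b_gt0 tau_gt0 eta_gt0 j (dual_optimal_tr opt)).
Qed.

Lemma dual_optimal_mass_le (i0 : 'I_n) : (2 * eta)^-1 * \sum_i rowsum P i <= AB / 2.
Proof.
set S := (2 * eta)^-1 * \sum_i rowsum P i.
have E_sum : \sum_i a i * expR (- u i / tau) = S.
  by rewrite /S mulr_sumr; apply: eq_bigr => i _; rewrite foc_row.
have F_sum : \sum_j b j * expR (- v j / tau) = S.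
  by rewrite /S -sum_colsum mulr_sumr; apply: eq_bigr => j _; rewrite dual_optimal_foc_col.
have weighted_ge0 :
    0 <= \sum_i a i * expR (- u i / tau) * u i + \sum_j b j * expR (- v j / tau) * v j.
  have -> : \sum_i a i * expR (- u i / tau) * u i
      = (2 * eta)^-1 * \sum_i \sum_j P i j * u i.
    by rewrite mulr_sumr; apply: eq_bigr => i _; rewrite foc_row -mulrA mulr_suml.
  have -> : \sum_j b j * expR (- v j / tau) * v j
      = (2 * eta)^-1 * \sum_i \sum_j P i j * v j.
    rewrite exchange_big mulr_sumr; apply: eq_bigr => j _.
    by rewrite dual_optimal_foc_col -mulrA mulr_suml.
  rewrite -mulrDr -big_split /=; apply: mulr_ge0; first by rewrite invr_ge0 mulr_ge0 // ltW.
  apply: sumr_ge0 => i _; rewrite -big_split /=; apply: sumr_ge0 => j _.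
  (* [P i j > 0] forces [u i + v j > C i j >= 0]. *)
  by rewrite -mulrDr mxE max0_subr_mulr_ge0.
have al_gt0 : 0 < \sum_i a i := sumr_gt0 i0 a_gt0.
have be_gt0 : 0 < \sum_j b j := sumr_gt0 i0 b_gt0.
have E_gt0 i : 0 < a i * expR (- u i / tau) by rewrite mulr_gt0 ?expR_gt0.
have F_gt0 j : 0 < b j * expR (- v j / tau) by rewrite mulr_gt0 ?expR_gt0.
have S_gt0 : 0 < S by rewrite -E_sum; exact: (sumr_gt0 i0 E_gt0).
have ent_u := log_sum_le (fun i => ltW (E_gt0 i)) a_gt0 (sumr_gt0 i0 E_gt0) al_gt0.
have ent_v := log_sum_le (fun j => ltW (F_gt0 j)) b_gt0 (sumr_gt0 i0 F_gt0) be_gt0.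
rewrite E_sum sum_klterm_mulr_expRN // in ent_u.
rewrite F_sum sum_klterm_mulr_expRN // in ent_v.
set A := \sum_i _ in weighted_ge0 ent_u; set B := \sum_j _ in weighted_ge0 ent_v.
have AB_le0 : - (A + B) / tau <= 0 by rewrite mulNr oppr_le0 divr_ge0 // ltW.
apply: le_mean_of_ln_add_le0 => //.
have : S * (ln (S / \sum_i a i) + ln (S / \sum_j b j)) <= 0 by lra.
by rewrite pmulr_rle0.
Qed.

Let AB_gt0 (i0 : 'I_n) : 0 < AB := addr_gt0 (sumr_gt0 i0 a_gt0) (sumr_gt0 i0 b_gt0).

Lemma dual_optimal_row_ge i : tau * ln (2 * a i / AB) <= u i.
Proof.
apply: ln_le_of_mulr_expRN_le => //; first exact: AB_gt0 i.
rewrite foc_row; apply: le_trans (dual_optimal_mass_le i).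
apply: ler_wpM2l; first by rewrite invr_ge0 mulr_ge0 // ltW.
by apply: ler_sumr_term => k; apply: rowsum_ge0.
Qed.

Lemma dual_optimal_col_ge j : tau * ln (2 * b j / AB) <= v j.
Proof.
apply: ln_le_of_mulr_expRN_le => //; first exact: AB_gt0 j.
rewrite dual_optimal_foc_col; apply: le_trans (dual_optimal_mass_le j).
rewrite -sum_colsum; apply: ler_wpM2l; first by rewrite invr_ge0 mulr_ge0 // ltW.
by apply: ler_sumr_term => k; apply: colsum_ge0.
Qed.

Lemma dual_optimal_clip_le i j : P i j <= eta * AB.
Proof.
have two_eta_gt0 : 0 < 2 * eta by rewrite mulr_gt0.
have := ler_wpM2l (ltW two_eta_gt0) (dual_optimal_mass_le i).
rewrite mulrA mulfV ?gt_eqF // mul1r (_ : 2 * eta * (AB / 2) = eta * AB); last by field.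
move=> sum_le; apply: le_trans sum_le.
apply: (@le_trans _ _ (rowsum P i)); first exact: ler_sumr_term.
by apply: ler_sumr_term => k; apply: rowsum_ge0.
Qed.

Section SupNorm.
Variables (N lm : R).
Hypotheses (C_le : forall i j, C i j <= N) (lm_le_a : forall i, lm <= ln (a i))
  (lm_le_b : forall j, lm <= ln (b j)).

Let slack_ge0 (i : 'I_n) : 0 <= N + eta * AB.
Proof.
apply: addr_ge0; first exact: le_trans (C_ge0 i i) (C_le i i).
by rewrite mulr_ge0 ?ltW ?AB_gt0.
Qed.

Lemma dual_optimal_abs_row_le i :
  `|u i| <= N + eta * AB + tau * ln (AB / 2) - tau * lm.
Proof.
apply: (abs_le_of_ln_bounds (y := a i) (z := b i)) => //; first exact: slack_ge0 i.
- exact: AB_gt0 i.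
- exact: dual_optimal_row_ge.
have := (clip_mx_feasible C u v i i).2; have := dual_optimal_clip_le i i.
have := dual_optimal_col_ge i; have := C_le i i; rewrite -/P; lra.
Qed.

Lemma dual_optimal_abs_col_le j :
  `|v j| <= N + eta * AB + tau * ln (AB / 2) - tau * lm.
Proof.
apply: (abs_le_of_ln_bounds (y := b j) (z := a j)) => //; first exact: slack_ge0 j.
- exact: AB_gt0 j.
- exact: dual_optimal_col_ge.
have := (clip_mx_feasible C u v j j).2; have := dual_optimal_clip_le j j.
have := dual_optimal_row_ge j; have := C_le j j; rewrite -/P; lra.
Qed.

End SupNorm.
End DualBounds.

Theorem mainTheorem7 (R : realType) (n : nat) (hn : (0 < n)%N)
  (C : 'M[R]_n) (a b : 'I_n -> R) (tau eta : R)
  (Xeta Xf : 'M[R]_n) (us vs : 'I_n -> R) (ts : 'M[R]_n) :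
  (forall i j, 0 <= C i j) ->
  (forall i, 0 < a i) -> (forall j, 0 < b j) ->
  0 < tau -> 0 < eta ->
  is_minimizer (gobj C a b tau eta) Xeta ->
  is_minimizer (fobj C a b tau) Xf ->
  dual_optimal C a b tau eta us vs ts ->
  let alpha := \sum_i a i in
  let beta := \sum_j b j in
  let amin := vmin (Ordinal hn) a in
  let bmin := vmin (Ordinal hn) b in
  let D := normInf_mx C + eta * (alpha + beta) + tau * ln ((alpha + beta) / 2)
           - tau * Num.min (ln amin) (ln bmin) in
  (* (i) *)
  (norm1_mx Xeta <= (alpha + beta) / 2 /\ norm1_mx Xf <= (alpha + beta) / 2) /\
  (* (ii) *)
  (forall i, tau * ln (2 * a i / (alpha + beta)) <= us i) /\
  (forall j, tau * ln (2 * b j / (alpha + beta)) <= vs j) /\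
  (* (iii) *)
  (normInf_v us <= D /\ normInf_v vs <= D) /\
  (* (iv) *)
  (forall i j, Num.min amin bmin * expR (- D / tau)
                 <= Num.min (rowsum Xeta i) (colsum Xeta j)).
Proof.
move=> C_ge0 a_gt0 b_gt0 tau_gt0 eta_gt0 Xeta_opt Xf_opt us_opt alpha beta amin bmin D.
set i0 := Ordinal hn; set lm := Num.min (ln amin) (ln bmin).
have amin_gt0 : 0 < amin := vmin_gt0 i0 a_gt0.
have bmin_gt0 : 0 < bmin := vmin_gt0 i0 b_gt0.
have lm_le_a i : lm <= ln (a i) by rewrite ge_min ler_ln ?posrE // /amin vmin_le.
have lm_le_b j : lm <= ln (b j) by rewrite ge_min orbC ler_ln ?posrE // /bmin vmin_le.
have C_le := le_normInf_mx C.
split.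
  have Xf_opt0 := is_minimizer_fobj_gobj0 Xf_opt.
  split; first exact: (minimizer_norm1_le C_ge0 a_gt0 b_gt0 tau_gt0 (ltW eta_gt0) i0 Xeta_opt).
  exact: (minimizer_norm1_le C_ge0 a_gt0 b_gt0 tau_gt0 (lexx 0) i0 Xf_opt0).
split; first exact: (dual_optimal_row_ge C_ge0 a_gt0 b_gt0 tau_gt0 eta_gt0 us_opt).
split; first exact: (dual_optimal_col_ge C_ge0 a_gt0 b_gt0 tau_gt0 eta_gt0 us_opt).
split.
  split; apply: (normInf_v_le i0) => k.
    exact: (dual_optimal_abs_row_le C_ge0 a_gt0 b_gt0 tau_gt0 eta_gt0 us_opt C_le
              lm_le_a lm_le_b).
  exact: (dual_optimal_abs_col_le C_ge0 a_gt0 b_gt0 tau_gt0 eta_gt0 us_opt C_le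
            lm_le_a lm_le_b).
move=> i j.
apply: (minimizer_marginal_ge C_ge0 a_gt0 b_gt0 tau_gt0 (ltW eta_gt0) i j Xeta_opt C_le).
- by rewrite lt_min amin_gt0.
- by move=> k; rewrite ge_min vmin_le.
- by move=> k; rewrite ge_min vmin_le orbT.
- by rewrite ln_min.
Qed.
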